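(* If $m\ge 10$ is even and $m=3t+1$ for some positive integer $t$, then $\lambda(L_m)<\lambda(T_m)$.
   Context: $\lambda(\cdot)$ denotes the largest adjacency eigenvalue. For even $m$, $L_m$ is obtained from a 5-cycle $u_1u_2u_3u_4u_5$ by adding $\frac{m-6}{2}$ new vertices each adjacent exactly to $u_1$ and $u_3$, and one new vertex adjacent only to $u_1$ (equivalently, $K_{2,\frac{m-2}{2}}$ with one edge subdivided, with a pendant edge attached at a vertex of maximum degree). When $\frac{m-4}{3}$ is a positive integer, $T_m$ is obtained from $C_5$ by replacing two adjacent vertices by independent sets of sizes $\frac{m-4}{3}$ and $2$ (each new vertex adjacent to all vertices/sets that the replaced vertex was adjacent to, so the two sets span a complete bipartite graph). *)

From mathcomp Require Import all_boot all_order all_algebra.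
Set Implicit Arguments. Unset Strict Implicit. Unset Printing Implicit Defensive.
Import Order.TTheory GRing.Theory Num.Theory.
Local Open Scope ring_scope.

Definition adjmx (F : fieldType) (n : nat) (e : nat -> nat -> bool) : 'M[F]_n :=
  \matrix_(i < n, j < n) ((e i j || e j i : bool)%:R).

(* L_m, with k = (m-6)/2 extra vertices adjacent to u1,u3.
   Vertices: 0..4 = u1..u5 (5-cycle), 5..4+k = common neighbours of u1 and u3,
   5+k = pendant vertex at u1.  Total k+6 = m/2+3 vertices, m edges. *)
Definition L_edge (k : nat) (i j : nat) : bool :=
  [|| (i == 0%N) && (j == 1%N), (i == 1%N) && (j == 2%N), (i == 2%N) && (j == 3%N),
      (i == 3%N) && (j == 4%N), (i == 0%N) && (j == 4%N),
      [&& (i == 0%N) || (i == 2%N), (5 <= j)%N & (j < 5 + k)%N]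
    | (i == 0%N) && (j == 5 + k)%N ].

Definition L_nv (m : nat) : nat := (m./2 - 3 + 6)%N.
Definition L_adj (F : fieldType) (m : nat) : 'M[F]_(L_nv m) :=
  adjmx F (L_nv m) (L_edge (m./2 - 3)).

(* T_m, with a = (m-4)/3: C_5 = u1..u5 with u1 replaced by an independent set A
   of size a and u2 by an independent set B of size 2.
   Vertices: 0..a-1 = A, a, a+1 = B, a+2 = u3, a+3 = u4, a+4 = u5. *)
Definition T_edge (a : nat) (i j : nat) : bool :=
  [|| [&& (i < a)%N, (a <= j)%N & (j < a + 2)%N],
      [&& (a <= i)%N, (i < a + 2)%N & j == (a + 2)%N],
      (i == a + 2)%N && (j == a + 3)%N,
      (i == a + 3)%N && (j == a + 4)%N
    | (i < a)%N && (j == a + 4)%N ].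

Definition T_nv (m : nat) : nat := ((m - 4) %/ 3 + 5)%N.
Definition T_adj (F : fieldType) (m : nat) : 'M[F]_(T_nv m) :=
  adjmx F (T_nv m) (T_edge ((m - 4) %/ 3)).

Definition largest_eigenvalue (F : realFieldType) (n : nat) (A : 'M[F]_n) (mu : F) : Prop :=
  eigenvalue A mu /\ forall nu, eigenvalue A nu -> nu <= mu.

(* Both graphs have twin vertices (vertices with the same neighbourhood), and an eigenvector
   for a nonzero eigenvalue is constant on every twin class.  Collapsing the classes, every
   nonzero eigenvalue of L_m is a root of a sextic phiL, while every root r > 1 of a quintic
   phiT is an eigenvalue of T_m.  As phiT(1) = -1 and phiT > 0 far to the right, the
   intermediate value theorem gives lambda(T_m) > 1, and phiT >= 0 on [lambda(T_m), oo): a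
   negative value there would produce a larger eigenvalue.  For m = 6s + 4 one has
   phiL(x) = x phiT(x) + (1 + s) x^2 + 2 s x - 3 s, which is positive on that ray, so L_m has
   no eigenvalue >= lambda(T_m). *)

From mathcomp Require Import all_boot all_order all_algebra zify ring lra.
From mathcomp Require Import polyrcf.
Import Order.TTheory GRing.Theory Num.Theory.
Local Open Scope ring_scope.

Lemma eq_from_diff {R : zmodType} {x y u v : R} : u = v -> x - y = u - v -> x = y.
Proof. by move=> uv diff; apply: subr0_eq; rewrite diff uv subrr. Qed.

Lemma det2_trivial (F : idomainType) (a b c d x y : F) :
  a * d - b * c != 0 -> a * x = b * y -> c * x = d * y -> x = 0 /\ y = 0.
Proof.
move=> det_neq0 Exy Eyx.
have detx : (a * d - b * c) * x = d * (a * x) - b * (c * x) by ring.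
have dety : (a * d - b * c) * y = a * (d * y) - c * (b * y) by ring.
rewrite Exy Eyx (mulrCA d) subrr -(mulr0 (a * d - b * c)) in detx.
rewrite -Exy -Eyx (mulrCA a) subrr -(mulr0 (a * d - b * c)) in dety.
by split; apply: (mulfI det_neq0).
Qed.

Definition nbr_sum {V : nmodType} (e : nat -> nat -> bool) n (g : nat -> V) j : V :=
  \sum_(0 <= i < n) g i *+ (e i j || e j i).

Section AdjacencySpectrum.
Context {F : fieldType}.
Implicit Types (e : nat -> nat -> bool) (g : nat -> F).

Lemma adjmx_eigenvalueP n e nu :
  eigenvalue (adjmx F n e) nu <->
  exists2 g, (exists2 j, (j < n)%N & g j != 0) &
    forall j, (j < n)%N -> nbr_sum e n g j = nu * g j.
Proof.
split=> [/eigenvalueP [v vA v_neq0] | [g [j jn gj_neq0] gA]].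
- pose g i := if insub i is Some i' then v 0 i' else 0.
  have gE (i : 'I_n) : g i = v 0 i by rewrite /g valK.
  exists g.
    case: (pickP (fun j => v 0 j != 0)) => [i vi | v0]; first by exists i; rewrite ?gE.
    by case/eqP: v_neq0; apply/rowP => i; rewrite mxE; apply/eqP/negbFE/v0.
  move=> j jn; have := congr1 (fun w : 'rV_n => w 0 (Ordinal jn)) vA.
  rewrite !mxE -gE => <-; rewrite /nbr_sum big_mkord.
  by apply: eq_bigr => i _; rewrite gE mxE mulr_natr.
- apply/eigenvalueP; exists (\row_(i < n) g i).
    apply/rowP => l; rewrite !mxE -gA // /nbr_sum big_mkord.
    by apply: eq_bigr => i _; rewrite !mxE mulr_natr.
  by apply: contraNneq gj_neq0 => /rowP /(_ (Ordinal jn)); rewrite !mxE => ->.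
Qed.

Section Twins.
Context {e : nat -> nat -> bool} {n j j' : nat}.
Hypothesis twins : forall i, (e i j || e j i) = (e i j' || e j' i).

Lemma twin_entries_eq {nu : F} {g : nat -> F} :
  (forall l, (l < n)%N -> nbr_sum e n g l = nu * g l) -> nu != 0 ->
  (j < n)%N -> (j' < n)%N -> g j = g j'.
Proof.
move=> gA nu_neq0 jn j'n; apply: (mulfI nu_neq0); rewrite -!gA //.
by apply: eq_bigr => i _; rewrite twins.
Qed.

Lemma twins_eigenvalue0 : (j < n)%N -> (j' < n)%N -> j != j' ->
  eigenvalue (adjmx F n e) 0.
Proof.
move=> jn j'n jj'; apply/eigenvalueP.
exists (delta_mx 0 (Ordinal jn) - delta_mx 0 (Ordinal j'n)).
  rewrite scale0r mulmxBl -!rowE; apply/eqP; rewrite subr_eq0; apply/eqP/rowP => i.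
  by rewrite !mxE orbC twins orbC.
apply/eqP => /rowP /(_ (Ordinal jn)); rewrite !mxE /= eqxx => /eqP.
by rewrite -val_eqE /= (negbTE jj') subr0 oner_eq0.
Qed.

End Twins.
End AdjacencySpectrum.

Lemma sum_nat_bool_true (R : nmodType) lo hi (g : nat -> R) (b : nat -> bool) :
  (forall i, (lo <= i < hi)%N -> b i) ->
  \sum_(lo <= i < hi) g i *+ b i = \sum_(lo <= i < hi) g i.
Proof. by move=> bT; apply: eq_big_nat => i /bT ->. Qed.

Lemma sum_nat_bool_false (R : nmodType) lo hi (g : nat -> R) (b : nat -> bool) :
  (forall i, (lo <= i < hi)%N -> b i = false) ->
  \sum_(lo <= i < hi) g i *+ b i = 0.
Proof. by move=> bF; rewrite big_nat big1 // => i /bF ->. Qed.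

Ltac decide_edges edge :=
  repeat match goal with
  | |- context [ _ *+ nat_of_bool ?b ] =>
      lazymatch b with
      | true => fail
      | false => fail
      | _ => first [ rewrite (_ : b = true); last by unfold edge; lia
                   | rewrite (_ : b = false); last by unfold edge; lia ]
      end
  end.

Ltac nbr_sum_expand layout edge :=
  rewrite /nbr_sum layout; decide_edges edge;
  first [ rewrite sum_nat_bool_true; last by move=> ? ?; unfold edge; lia
        | rewrite sum_nat_bool_false; last by move=> ? ?; unfold edge; lia ];
  rewrite /=; ring.

(* The characteristic polynomial of L_m is x^k phiL(x): phiL is that of the quotient matrix
   on the cells u1, {u2 and the k common neighbours of u1 and u3}, u3, u4, u5, pendant. *)
Definition phiL {R : nzRingType} (K x : R) : R :=
  x ^+ 6 - (6 + 2 * K) * x ^+ 4 + (8 + 5 * K) * x ^+ 2 - (2 + 2 * K) * x - (1 + K).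

Lemma L_cell_system_trivial {F : fieldType} {K nu x0 x1 x2 x3 x4 xp : F} :
  phiL K nu != 0 ->
  nu * x0 = (K + 1) * x1 + x4 + xp -> nu * x1 = x0 + x2 ->
  nu * x2 = (K + 1) * x1 + x3 -> nu * x3 = x2 + x4 -> nu * x4 = x3 + x0 ->
  nu * xp = x0 ->
  x0 = 0 /\ x1 = 0 /\ x2 = 0 /\ x3 = 0 /\ x4 = 0 /\ xp = 0.
Proof.
move=> phi_neq0 E0 E1 E2 E3 E4 Ep.
have e2 : x2 = nu * x1 - x0 by rewrite E1; ring.
have e3 : x3 = nu * x2 - (K + 1) * x1 by rewrite E2; ring.
have e4 : x4 = nu * x3 - x2 by rewrite E3; ring.
subst x4 x3 x2 x0.
(* What is left is a 2 x 2 system in (xp, x1) with determinant phiL K nu. *)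
have Ep1 : (nu ^+ 3 + nu ^+ 2 - nu - 1) * xp = (nu ^+ 3 - (K + 2) * nu + K + 1) * x1.
  by apply: (eq_from_diff E0); ring.
have E1p : (nu ^+ 4 - 2 * nu ^+ 2 + nu) * xp = (nu ^+ 4 - (K + 3) * nu ^+ 2 + K + 1) * x1.
  by apply: (eq_from_diff (esym E4)); ring.
have [-> ->] : xp = 0 /\ x1 = 0.
  apply: det2_trivial Ep1 E1p; apply: contra phi_neq0 => /eqP det0.
  by apply/eqP; rewrite -det0 /phiL; ring.
by do !split; ring.
Qed.

Section GraphL.
Context {F : fieldType} {k : nat}.
Implicit Types (g f : nat -> F).

Lemma sum_L_layout f : \sum_(0 <= i < k + 6) f i =
  f 0%N + f 1%N + f 2%N + f 3%N + f 4%N + \sum_(5 <= i < 5 + k) f i + f (5 + k)%N.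
Proof.
rewrite (_ : (k + 6 = (5 + k).+1)%N); last by lia.
rewrite big_nat_recr //= (big_cat_nat _ (n := 5)) //= ?leq_addr //.
suff -> : \sum_(0 <= i < 5) f i = f 0%N + f 1%N + f 2%N + f 3%N + f 4%N by [].
by rewrite !big_nat_recl // big_geq // addr0 !addrA.
Qed.

Ltac L_nbr := nbr_sum_expand sum_L_layout L_edge.

Lemma L_nbr_sum0 g : nbr_sum (L_edge k) (k + 6) g 0 =
  g 1%N + g 4%N + \sum_(5 <= i < 5 + k) g i + g (5 + k)%N.
Proof. L_nbr. Qed.
Lemma L_nbr_sum1 g : nbr_sum (L_edge k) (k + 6) g 1 = g 0%N + g 2%N.
Proof. L_nbr. Qed.
Lemma L_nbr_sum2 g : nbr_sum (L_edge k) (k + 6) g 2 =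
  g 1%N + g 3%N + \sum_(5 <= i < 5 + k) g i.
Proof. L_nbr. Qed.
Lemma L_nbr_sum3 g : nbr_sum (L_edge k) (k + 6) g 3 = g 2%N + g 4%N.
Proof. L_nbr. Qed.
Lemma L_nbr_sum4 g : nbr_sum (L_edge k) (k + 6) g 4 = g 3%N + g 0%N.
Proof. L_nbr. Qed.
Lemma L_nbr_sum_pendant g : nbr_sum (L_edge k) (k + 6) g (5 + k) = g 0%N.
Proof. L_nbr. Qed.

Lemma L_twins {j} : (5 <= j < 5 + k)%N ->
  forall i, (L_edge k i 1 || L_edge k 1 i) = (L_edge k i j || L_edge k j i).
Proof.
move=> /andP [j5 jk] i.
have jc c : (c < 5)%N -> (j == c) = false by move=> c5; apply/eqP; lia.
rewrite /L_edge (ltn_eqF jk) j5 jk !jc // orbF.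
by case: i => [|[|[|i]]].
Qed.

Lemma L_eigenvalue0 : (0 < k)%N -> eigenvalue (adjmx F (k + 6) (L_edge k)) 0.
Proof.
move=> k_gt0; apply: (@twins_eigenvalue0 F (L_edge k) (k + 6) 1 5); try lia.
by apply: L_twins; lia.
Qed.

Lemma L_eigenvalue_root {nu : F} : eigenvalue (adjmx F (k + 6) (L_edge k)) nu -> nu != 0 ->
  phiL k%:R nu = 0.
Proof.
move=> /adjmx_eigenvalueP [g [j jn gj_neq0] gA] nu_neq0.
have gS i : (5 <= i < 5 + k)%N -> g i = g 1%N.
  by move=> iS; symmetry; apply: (twin_entries_eq (L_twins iS) gA nu_neq0); lia.
have sumS : \sum_(5 <= i < 5 + k) g i = k%:R * g 1%N.
  by rewrite (eq_big_nat _ _ gS) sumr_const_nat addKn mulr_natl.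
have eq_at l : (l <= 5 + k)%N -> nu * g l = nbr_sum (L_edge k) (k + 6) g l.
  by move=> lk; rewrite gA //; lia.
have E0 : nu * g 0%N = (k%:R + 1) * g 1%N + g 4%N + g (5 + k)%N.
  by rewrite eq_at // L_nbr_sum0 sumS; ring.
have E1 : nu * g 1%N = g 0%N + g 2%N by rewrite eq_at // L_nbr_sum1.
have E2 : nu * g 2%N = (k%:R + 1) * g 1%N + g 3%N.
  by rewrite eq_at // L_nbr_sum2 sumS; ring.
have E3 : nu * g 3%N = g 2%N + g 4%N by rewrite eq_at // L_nbr_sum3.
have E4 : nu * g 4%N = g 3%N + g 0%N by rewrite eq_at // L_nbr_sum4.
have Ep : nu * g (5 + k)%N = g 0%N by rewrite eq_at // L_nbr_sum_pendant.
apply/eqP; apply: contraNT gj_neq0 => phi_neq0; apply/eqP.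
have [g0 [g1 [g2 [g3 [g4 gp]]]]] := L_cell_system_trivial phi_neq0 E0 E1 E2 E3 E4 Ep.
have [j4 | [jS | ->]] : (j <= 4)%N \/ (5 <= j < 5 + k)%N \/ j = (5 + k)%N by lia.
- by case: j j4 {jn} => [|[|[|[|[|j]]]]].
- by rewrite gS.
- exact: gp.
Qed.

End GraphL.

(* The characteristic polynomial of T_m is x^a phiT(x), phiT being that of the quotient
   matrix on the cells A, B, u3, u4, u5. *)
Definition phiT {R : nzRingType} (A x : R) : R :=
  x ^+ 5 - (4 + 3 * A) * x ^+ 3 + (2 + 7 * A) * x - 4 * A.

Lemma T_cell_system_solution {F : fieldType} {A nu : F} :
  phiT A nu = 0 -> A * nu ^+ 2 + nu - A != 0 ->
  exists xA xB x3 x4 x5 : F, xB != 0 /\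
    [/\ nu * xA = 2 * xB + x5, nu * xB = A * xA + x3, nu * x3 = 2 * xB + x4,
        nu * x4 = x3 + x5 & nu * x5 = x4 + A * xA].
Proof.
move=> phi0 xB_neq0.
(* Eliminating x3, x4, x5 leaves a 2 x 2 system in (xA, xB) with determinant phiT A nu;
   (xA, xB) below spans its kernel. *)
set xB := A * nu ^+ 2 + nu - A; set xA := nu ^+ 3 - 3 * nu + 2.
set x3 := nu * xB - A * xA; set x4 := nu * x3 - 2 * xB; set x5 := nu * x4 - x3.
exists xA, xB, x3, x4, x5; split => //; split; rewrite /x5 /x4 /x3; try ring.
- by rewrite /xA /xB; ring.
- by apply: (eq_from_diff phi0); rewrite /phiT /xA /xB; ring.
Qed.

Section GraphT.
Context {F : fieldType} {a : nat}.
Implicit Types (g f : nat -> F).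

Lemma sum_T_layout f : \sum_(0 <= i < a + 5) f i = \sum_(0 <= i < a) f i +
  f a + f (a + 1)%N + f (a + 2)%N + f (a + 3)%N + f (a + 4)%N.
Proof. by rewrite !addnS addn0 !big_nat_recr. Qed.

Ltac T_nbr := nbr_sum_expand sum_T_layout T_edge.

Lemma T_nbr_sumA g j : (j < a)%N ->
  nbr_sum (T_edge a) (a + 5) g j = g a + g (a + 1)%N + g (a + 4)%N.
Proof. move=> ja; T_nbr. Qed.
Lemma T_nbr_sumB g : nbr_sum (T_edge a) (a + 5) g a = \sum_(0 <= i < a) g i + g (a + 2)%N.
Proof. T_nbr. Qed.
Lemma T_nbr_sumB' g :
  nbr_sum (T_edge a) (a + 5) g (a + 1) = \sum_(0 <= i < a) g i + g (a + 2)%N.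
Proof. T_nbr. Qed.
Lemma T_nbr_sum3 g : nbr_sum (T_edge a) (a + 5) g (a + 2) = g a + g (a + 1)%N + g (a + 3)%N.
Proof. T_nbr. Qed.
Lemma T_nbr_sum4 g : nbr_sum (T_edge a) (a + 5) g (a + 3) = g (a + 2)%N + g (a + 4)%N.
Proof. T_nbr. Qed.
Lemma T_nbr_sum5 g : nbr_sum (T_edge a) (a + 5) g (a + 4) = \sum_(0 <= i < a) g i + g (a + 3)%N.
Proof. T_nbr. Qed.

Lemma T_root_eigenvalue nu : phiT a%:R nu = 0 -> a%:R * nu ^+ 2 + nu - a%:R != 0 ->
  eigenvalue (adjmx F (a + 5) (T_edge a)) nu.
Proof.
move=> phi0 nondeg.
have [xA [xB [x3 [x4 [x5 [xB_neq0 [EA EB E3 E4 E5]]]]]]] := T_cell_system_solution phi0 nondeg.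
pose g i := if (i < a)%N then xA else nth 0 [:: xB; xB; x3; x4; x5] (i - a).
have gA i : (0 <= i < a)%N -> g i = xA by move=> /= ia; rewrite /g ia.
have gB : g a = xB by rewrite /g ltnn subnn.
have gS m : g (a + m)%N = nth 0 [:: xB; xB; x3; x4; x5] m.
  by rewrite /g ltnNge leq_addr addKn.
have sumA : \sum_(0 <= i < a) g i = a%:R * xA.
  by rewrite (eq_big_nat _ _ gA) sumr_const_nat subn0 mulr_natl.
apply/adjmx_eigenvalueP; exists g; first by exists a; rewrite ?gB //; lia.
move=> j jn; have [ja | aj] := ltnP j a.
  by rewrite T_nbr_sumA // (gA j) // gB !gS /= EA; ring.
have [->|[->|[->|[->|->]]]] :
  j = a \/ j = (a + 1)%N \/ j = (a + 2)%N \/ j = (a + 3)%N \/ j = (a + 4)%N by lia.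
- by rewrite T_nbr_sumB sumA gS gB EB.
- by rewrite T_nbr_sumB' sumA !gS EB.
- by rewrite T_nbr_sum3 gB !gS /= E3; ring.
- by rewrite T_nbr_sum4 !gS /= E4.
- by rewrite T_nbr_sum5 sumA !gS /= E5 addrC.
Qed.

End GraphT.

Lemma largest_eigenvalue_exists {R : rcfType} {n} {A : 'M[R]_n} {nu : R} :
  eigenvalue A nu -> exists mu, largest_eigenvalue A mu.
Proof.
move=> Anu.
have eigE x : eigenvalue A x = (x \in rootsR (char_poly A)).
  by rewrite eigenvalue_root_char -(roots_on_rootsR (monic_neq0 (char_poly_monic A))).
exists (\big[Num.max/nu]_(x <- rootsR (char_poly A)) x); split.
  rewrite big_seq; apply: (big_ind (eigenvalue A)) => // [x y Ax Ay | x]; last by rewrite eigE.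
  by rewrite maxEle; case: ifP.
by move=> x; rewrite eigE => x_root; apply: le_bigmax_seq.
Qed.

Lemma phiT_gt0 {R : realFieldType} {A y : R} : 0 <= A -> A + 4 <= y -> 0 < phiT A y.
Proof.
move=> A_ge0 Ay.
have y_sq : 12 <= y ^+ 2 - (4 + 3 * A) by nra.
have : 0 < y ^+ 3 by rewrite exprn_gt0 //; lra.
have : 0 <= (2 + 7 * A) * y - 4 * A by nra.
rewrite /phiT; nra.
Qed.

Lemma phiT_ivt {R : rcfType} (A a b : R) : a <= b -> phiT A a <= 0 <= phiT A b ->
  exists2 r, a <= r <= b & phiT A r = 0.
Proof.
pose p : {poly R} := 'X^5 - (4 + 3 * A)%:P * 'X^3 + (2 + 7 * A)%:P * 'X - (4 * A)%:P.
have pE x : p.[x] = phiT A x.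
  by rewrite /p !(hornerD, hornerN, hornerCM, hornerXn, hornerX, hornerC).
move=> ab; rewrite -!pE => sign.
by have [r rab /rootP] := poly_ivt ab sign; rewrite pE; exists r.
Qed.

Lemma phiL_phiT {R : comNzRingType} (S x : R) :
  phiL (3 * S - 1) x = x * phiT (2 * S) x + ((1 + S) * x ^+ 2 + 2 * S * x - 3 * S).
Proof. by rewrite /phiL /phiT; ring. Qed.

Section SpectralRadiusT.
Context {R : rcfType} {a : nat}.
Local Notation T := (adjmx R (a + 5) (T_edge a)).

Lemma T_root_gt1_eigenvalue r : 1 < r -> phiT a%:R r = 0 -> eigenvalue T r.
Proof.
move=> r_gt1 phi0; apply: T_root_eigenvalue phi0 _; rewrite gt_eqF //.
have : 0 <= a%:R * (r ^+ 2 - 1) :> R by rewrite mulr_ge0 ?ler0n //; nra.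
nra.
Qed.

Lemma T_eigenvalue_beyond {x} :
  1 <= x -> phiT a%:R x < 0 -> exists2 r, x < r & eigenvalue T r.
Proof.
move=> x_ge1 phi_lt0.
have a_ge0 : 0 <= a%:R :> R by rewrite ler0n.
have x_le : x <= a%:R + 4.
  by rewrite leNgt; apply: contraTN phi_lt0 => /ltW /(phiT_gt0 a_ge0) /ltW; rewrite leNgt.
have [r /andP [xr _] phir] : exists2 r, x <= r <= a%:R + 4 & phiT a%:R r = 0.
  by apply: phiT_ivt => //; rewrite (ltW phi_lt0) ltW // phiT_gt0.
have xr' : x < r.
  by rewrite lt_neqAle xr andbT; apply: contraTneq phi_lt0 => ->; rewrite phir ltxx.
by exists r => //; apply: T_root_gt1_eigenvalue phir; apply: le_lt_trans xr'.
Qed.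

Lemma T_largest_eigenvalue_gt1 : exists2 mu, largest_eigenvalue T mu & 1 < mu.
Proof.
have [r r_gt1 T_r] : exists2 r, 1 < r & eigenvalue T r.
  by apply: T_eigenvalue_beyond => //; rewrite /phiT expr1n; lra.
have [mu [T_mu mu_max]] := largest_eigenvalue_exists T_r.
by exists mu => //; apply: lt_le_trans (mu_max r T_r).
Qed.

Lemma phiT_ge0_beyond {mu x} :
  largest_eigenvalue T mu -> 1 <= x -> mu <= x -> 0 <= phiT a%:R x.
Proof.
move=> [_ mu_max] x_ge1 mu_x; rewrite leNgt.
apply/negP => /(T_eigenvalue_beyond x_ge1) [r xr T_r].
by have := le_trans (mu_max r T_r) mu_x; rewrite leNgt xr.
Qed.

End SpectralRadiusT.

Lemma largest_eigenvalue_L_lt_T {R : rcfType} s : (0 < s)%N ->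
  exists muL muT : R,
    [/\ largest_eigenvalue (adjmx R (3 * s - 1 + 6) (L_edge (3 * s - 1))) muL,
        largest_eigenvalue (adjmx R (2 * s + 5) (T_edge (2 * s))) muT & muL < muT].
Proof.
move=> s_gt0.
have [muT T_muT muT_gt1] := @T_largest_eigenvalue_gt1 R (2 * s).
have L_0 : eigenvalue (adjmx R (3 * s - 1 + 6) (L_edge (3 * s - 1))) 0.
  by apply: L_eigenvalue0; lia.
have [muL L_muL] := largest_eigenvalue_exists L_0.
exists muL, muT; split => //; rewrite ltNge; apply/negP => muT_le_muL.
have muL_gt1 : 1 < muL := lt_le_trans muT_gt1 muT_le_muL.
have := L_eigenvalue_root L_muL.1 (lt0r_neq0 (lt_trans ltr01 muL_gt1)).
have := phiT_ge0_beyond T_muT (ltW muL_gt1) muT_le_muL.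
rewrite natrB ?natrM ?phiL_phiT; last lia.
set S := s%:R; move=> phiT_ge0 phiL0.
have S_ge1 : 1 <= S by rewrite ler1n.
have : 0 <= muL * phiT (2 * S) muL by rewrite mulr_ge0 //; lra.
have : 0 <= (1 + S) * (muL ^+ 2 - 1) by rewrite mulr_ge0 //; nra.
have : 0 <= S * (muL - 1) by rewrite mulr_ge0 //; lra.
nra.
Qed.

Theorem lemma2p3 (R : rcfType) (m : nat) :
  (10 <= m)%N -> ~~ odd m -> (exists t : nat, (0 < t)%N /\ m = (3 * t + 1)%N) ->
  exists muL muT : R,
    [/\ largest_eigenvalue (L_adj R m) muL,
        largest_eigenvalue (T_adj R m) muT & muL < muT].
Proof.
move=> m_ge10 m_even [t [t_gt0 m_eq]].
have t_odd : odd t by move: m_even; rewrite m_eq oddD oddM /= addbT negbK.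
have [s t_eq] : exists s, t = s.*2.+1 by exists t./2; rewrite -{1}(odd_double_half t) t_odd.
have s_gt0 : (0 < s)%N by lia.
rewrite /L_adj /T_adj /L_nv /T_nv.
have -> : ((m - 4) %/ 3 = 2 * s)%N by lia.
have -> : (m./2 - 3 = 3 * s - 1)%N by rewrite -divn2; lia.
exact: largest_eigenvalue_L_lt_T.
Qed.
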